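(* Let $\mathcal I$ be a finite set with $|\mathcal I|\ge 2$, $\nu\in(0,1)$, and $L\ge 1$ an integer. Define functions on $\mathbb R^{\mathcal I}$ by backward recursion: $$V_L^*(\mathbf m)=\max_{a\in\mathcal I}\frac{e^{m[a]}}{\sum_{l\in\mathcal I}e^{m[l]}},$$ and for $k=L-1,L-2,\dots,0$ and $a\in\mathcal I$, $$q_k(\mathbf m,a)=\int_0^\infty V_{k+1}^*\big(\mathbf m+J(y)\boldsymbol\delta[a]\big)\,f(y\mid\mathbf m,a)\,dy,\qquad V_k^*(\mathbf m)=\max_{a\in\mathcal I}q_k(\mathbf m,a),$$ where $J(y)=(1-\nu)y+\ln\nu$, $\boldsymbol\delta[a]\in\mathbb R^{\mathcal I}$ is the vector with entries $\delta[a,x]$, $x\in\mathcal I$, and, with $p_a(\mathbf m)=e^{m[a]}/\sum_{l\in\mathcal I}e^{m[l]}$, $$f(y\mid\mathbf m,a)=p_a(\mathbf m)\,\nu e^{-\nu y}+\big(1-p_a(\mathbf m)\big)e^{-y},\quad y\ge 0.$$ Then for every $k\in\{0,\dots,L-1\}$, $\mathbf m\in\mathbb R^{\mathcal I}$ and $a\in\mathcal I$, $$q_k(\mathbf m,a)\ \ge\ q_k^{LB}(\mathbf m,a):=\frac{1}{\sum_{l\in\mathcal I}e^{m[l]}}\Big[\xi(a;\mathbf m)+\exp\Big\{\frac{\min_{x_i\neq x_j}\big(m[x_i]-\nu m[x_j]\big)}{1-\nu}\Big\}\,h(\nu)\sum_{n=1}^{L-k-1}g(\nu)^n\Big],$$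 (where $\sum_{n=1}^{L-k-1}g(\nu)^n=\frac{g(\nu)-g(\nu)^{L-k}}{1-g(\nu)}$ when $g(\nu)\ne1$), and $$q_k(\mathbf m,a)\ \le\ q_k^{UB}(\mathbf m,a):=\frac{[1+h(\nu)]^{L-k-1}}{\sum_{l\in\mathcal I}e^{m[l]}}\,\xi(a;\mathbf m).$$ Moreover, if $x_{[1]},x_{[2]},\dots$ is an ordering of $\mathcal I$ with $m[x_{[1]}]\ge m[x_{[2]}]\ge\cdots$, then for every $k\in\{0,\dots,L-1\}$, $$q_k^{LB}(\mathbf m,x_{[2]})=\max_{a\in\mathcal I}q_k^{LB}(\mathbf m,a)\le V_k^*(\mathbf m)\le \max_{a\in\mathcal I}q_k^{UB}(\mathbf m,a)=q_k^{UB}(\mathbf m,x_{[2]}).$$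
   Context: The minimum $\min_{x_i\neq x_j}$ ranges over ordered pairs of distinct elements of $\mathcal I$. For $a\in\mathcal I$, $M_a=\max_{\hat a\neq a}m[\hat a]$ and $$\xi(a;\mathbf m)=\begin{cases}\exp\{m[a]\}, & \text{if } M_a-m[a]<\ln\nu,\\ \exp\{M_a\}+h(\nu)\exp\Big\{\dfrac{m[a]-\nu M_a}{1-\nu}\Big\}, & \text{otherwise,}\end{cases}$$ $h(\nu)=\exp\{\frac{\nu}{1-\nu}\ln\nu\}-\exp\{\frac{\ln\nu}{1-\nu}\}>0$ and $g(\nu)=\exp\{\frac{\ln\nu}{1-\nu}\}\big[\frac{1}{1+\nu}-\frac{\ln\nu}{1-\nu}\big]>0$. Interpretation: $\mathbf m$ is the log-belief (preference) vector over beam indices, $q_k$ the Q-function and $V_k^*$ the optimal value (maximal probability of correct alignment at the end of $L$ beam-alignment slots). *)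

From Stdlib Require Import Reals Lra List ClassicalEpsilon.
Open Scope R_scope.

(* The finite index set I is {0,...,n-1}; vectors in R^I are functions nat -> R
   (values outside {0..n-1} are irrelevant). *)

(* maximum / minimum of a (nonempty) list of reals; default 0 on nil *)
Definition maxl (l : list R) : R :=
  match l with nil => 0 | x :: t => fold_right Rmax x t end.
Definition minl (l : list R) : R :=
  match l with nil => 0 | x :: t => fold_right Rmin x t end.

Definition maxI (n : nat) (F : nat -> R) : R := maxl (map F (seq 0 n)).

Definition sumexp (n : nat) (m : nat -> R) : R :=
  fold_right Rplus 0 (map (fun l => exp (m l)) (seq 0 n)).

Definition pa (n : nat) (m : nat -> R) (a : nat) : R := exp (m a) / sumexp n m.

Definition delta (a x : nat) : R := if Nat.eqb x a then 1 else 0.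

Definition shift (m : nat -> R) (a : nat) (t : R) : nat -> R :=
  fun x => m x + t * delta a x.

Definition J (nu y : R) : R := (1 - nu) * y + ln nu.

Definition dens (n : nat) (nu : R) (m : nat -> R) (a : nat) (y : R) : R :=
  pa n m a * nu * exp (- nu * y) + (1 - pa n m a) * exp (- y).

Definition is_int0inf (f : R -> R) (l : R) : Prop :=
  exists pr : (forall T : R, Riemann_integrable f 0 T),
    forall eps : R, eps > 0 -> exists M : R, forall T : R, T >= M ->
      Rabs (RiemannInt (pr T) - l) < eps.

Definition int0inf (f : R -> R) : R := epsilon (inhabits 0) (is_int0inf f).

(* Vrev j = V^*_{L-j} : backward recursion indexed by the number of remaining steps *)
Fixpoint Vrev (n : nat) (nu : R) (j : nat) (m : nat -> R) : R :=
  match j with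
  | O => maxI n (fun a => pa n m a)
  | S j' => maxI n (fun a =>
      int0inf (fun y => Vrev n nu j' (shift m a (J nu y)) * dens n nu m a y))
  end.

Definition Vstar (n : nat) (nu : R) (L k : nat) (m : nat -> R) : R :=
  Vrev n nu (L - k) m.

Definition qk (n : nat) (nu : R) (L k : nat) (m : nat -> R) (a : nat) : R :=
  int0inf (fun y => Vstar n nu L (S k) (shift m a (J nu y)) * dens n nu m a y).

Definition hnu (nu : R) : R :=
  exp (nu / (1 - nu) * ln nu) - exp (ln nu / (1 - nu)).

Definition gnu (nu : R) : R :=
  exp (ln nu / (1 - nu)) * (1 / (1 + nu) - ln nu / (1 - nu)).

Definition Mexc (n : nat) (m : nat -> R) (a : nat) : R :=
  maxl (map m (filter (fun x => negb (Nat.eqb x a)) (seq 0 n))).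

Definition xi (n : nat) (nu : R) (a : nat) (m : nat -> R) : R :=
  if Rlt_dec (Mexc n m a - m a) (ln nu) then exp (m a)
  else exp (Mexc n m a) + hnu nu * exp ((m a - nu * Mexc n m a) / (1 - nu)).

Definition minpair (n : nat) (nu : R) (m : nat -> R) : R :=
  minl (map (fun p : nat * nat => m (fst p) - nu * m (snd p))
          (filter (fun p : nat * nat => negb (Nat.eqb (fst p) (snd p)))
                  (list_prod (seq 0 n) (seq 0 n)))).

Definition geomsum (g : R) (N : nat) : R :=
  fold_right Rplus 0 (map (fun i => g ^ i) (seq 1 N)).

Definition qLB (n : nat) (nu : R) (L k : nat) (m : nat -> R) (a : nat) : R :=
  / sumexp n m * (xi n nu a m
     + exp (minpair n nu m / (1 - nu)) * hnu nu * geomsum (gnu nu) (L - k - 1)).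

Definition qUB (n : nat) (nu : R) (L k : nat) (m : nat -> R) (a : nat) : R :=
  (1 + hnu nu) ^ (L - k - 1) / sumexp n m * xi n nu a m.

From Stdlib Require Import Reals List Lra Lia Classical FunctionalExtensionality ClassicalEpsilon.
From Coquelicot Require Import Coquelicot.
Open Scope R_scope.

(* Write Sigma(m) = sum_l e^{m[l]}.  The whole recursion is better handled in
   unnormalized form: W_j(m) = V(m) Sigma(m), where V is the optimal value with j
   steps to go.  Bayes' rule (Lemma [density_normalization]) turns the recursion into
     W_{j+1}(m) = max_a Q_j(m, a),  Q_j(m, a) = int_0^oo W_j(m + J(y) delta[a]) e^{-y} dy,
   and q_k = Q_{L-k-1} / Sigma.  By induction on j we show that W_j is monotone in m,
   is multiplied by e^t when m is translated by t, and satisfies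
     Emax(m) + h cmin(m) (1 + g + ... + g^{j-1}) <= W_j(m) <= (1 + h)^j Emax(m),
   with Emax(m) = max_b e^{m[b]} and cmin(m) = exp(min_{i<>j}(m[i] - nu m[j])/(1 - nu)).
   The step rests on two explicit integrals: int Emax(m + J(y) delta[a]) e^{-y} dy = xi(a; m)
   and int phi(y) e^{-y} dy = g(nu), where phi controls how cmin decreases under a shift;
   monotonicity and translation also make the integrands continuous, which gives existence
   of the improper integrals by domination.  Finally xi(.; m) is maximized at the
   second-best index, which reduces to the one-variable inequality [xi_branch_order]. *)

(** * Finite maxima and minima *)

Lemma fold_Rmax_spec (x : R) (t : list R) :
  (forall y, In y (x :: t) -> y <= fold_right Rmax x t) /\ In (fold_right Rmax x t) (x :: t).
Proof.
  induction t as [|y t [IHub IHin]]; simpl.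
  - split; [intros z [<-|[]]; lra | now left].
  - split.
    + intros z [<-|[<-|Hz]].
      * apply Rle_trans with (fold_right Rmax x t); [apply IHub; now left|apply Rmax_r].
      * apply Rmax_l.
      * apply Rle_trans with (fold_right Rmax x t); [apply IHub; now right|apply Rmax_r].
    + destruct (Rle_dec y (fold_right Rmax x t)).
      * rewrite Rmax_right by lra. destruct IHin as [<-|H]; [now left|now right; right].
      * rewrite Rmax_left by lra. now right; left.
Qed.

Lemma fold_Rmin_spec (x : R) (t : list R) :
  (forall y, In y (x :: t) -> fold_right Rmin x t <= y) /\ In (fold_right Rmin x t) (x :: t).
Proof.
  induction t as [|y t [IHlb IHin]]; simpl.
  - split; [intros z [<-|[]]; lra | now left].
  - split.
    + intros z [<-|[<-|Hz]].
      * apply Rle_trans with (fold_right Rmin x t); [apply Rmin_r|apply IHlb; now left].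
      * apply Rmin_l.
      * apply Rle_trans with (fold_right Rmin x t); [apply Rmin_r|apply IHlb; now right].
    + destruct (Rle_dec y (fold_right Rmin x t)).
      * rewrite Rmin_left by lra. now right; left.
      * rewrite Rmin_right by lra. destruct IHin as [<-|H]; [now left|now right; right].
Qed.

Lemma maxl_spec (l : list R) :
  l <> nil -> In (maxl l) l /\ forall x, In x l -> x <= maxl l.
Proof.
  destruct l as [|x t]; [congruence|]. intros _.
  destruct (fold_Rmax_spec x t). now split.
Qed.

Lemma minl_spec (l : list R) :
  l <> nil -> In (minl l) l /\ forall x, In x l -> minl l <= x.
Proof.
  destruct l as [|x t]; [congruence|]. intros _.
  destruct (fold_Rmin_spec x t). now split.
Qed.

Lemma in_nonnil {A : Type} (x : A) (l : list A) : In x l -> l <> nil.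
Proof. now intros H ->. Qed.

Lemma in_seq0 (a n : nat) : In a (seq 0 n) <-> (a < n)%nat.
Proof. rewrite in_seq. lia. Qed.

Lemma maxI_ge (n : nat) (F : nat -> R) (a : nat) : (a < n)%nat -> F a <= maxI n F.
Proof.
  intros Ha. unfold maxI.
  assert (Hin : In (F a) (map F (seq 0 n))) by now apply in_map, in_seq0.
  now apply (maxl_spec _ (in_nonnil _ _ Hin)).
Qed.

Lemma maxI_ext (n : nat) (F G : nat -> R) :
  (forall a, (a < n)%nat -> F a = G a) -> maxI n F = maxI n G.
Proof.
  intros H. unfold maxI. f_equal. apply map_ext_in. intros a Ha. now apply H, in_seq0.
Qed.

Section MaxOverIndices.
Variable n : nat.
Hypothesis Hn : (1 <= n)%nat.

Lemma maxI_attained (F : nat -> R) : exists a, (a < n)%nat /\ maxI n F = F a.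
Proof.
  unfold maxI.
  assert (Hin : In (F 0%nat) (map F (seq 0 n))) by (apply in_map, in_seq0; lia).
  destruct (maxl_spec _ (in_nonnil _ _ Hin)) as [Hmax _].
  apply in_map_iff in Hmax as [a [Ha Hseq]].
  exists a. split; [now apply in_seq0|auto].
Qed.

Lemma maxI_le (F : nat -> R) (B : R) :
  (forall a, (a < n)%nat -> F a <= B) -> maxI n F <= B.
Proof. intros H. destruct (maxI_attained F) as [a [Ha ->]]. auto. Qed.

Lemma maxI_mono (F G : nat -> R) :
  (forall a, (a < n)%nat -> F a <= G a) -> maxI n F <= maxI n G.
Proof.
  intros H. apply maxI_le. intros a Ha.
  apply Rle_trans with (G a); [auto|now apply maxI_ge].
Qed.

Lemma maxI_at (F : nat -> R) (x : nat) :
  (x < n)%nat -> (forall a, (a < n)%nat -> F a <= F x) -> maxI n F = F x.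
Proof. intros Hx H. apply Rle_antisym; [now apply maxI_le|now apply maxI_ge]. Qed.

Lemma maxI_scal (F : nat -> R) (c : R) :
  0 <= c -> maxI n (fun a => c * F a) = c * maxI n F.
Proof.
  intros Hc. destruct (maxI_attained F) as [x [Hx Hm]]. rewrite Hm.
  apply (maxI_at (fun a => c * F a)); auto. intros a Ha. apply Rmult_le_compat_l; auto.
  rewrite <- Hm. now apply maxI_ge.
Qed.
End MaxOverIndices.

Section MaxExcluding.
Variables (n : nat) (m : nat -> R) (a : nat).
Hypothesis Hn : (2 <= n)%nat.

Lemma in_excluded (x : nat) :
  In x (filter (fun x => negb (Nat.eqb x a)) (seq 0 n)) <-> (x < n)%nat /\ x <> a.
Proof. rewrite filter_In, in_seq0. destruct (Nat.eqb_spec x a); simpl; intuition. Qed.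

Lemma Mexc_ge (b : nat) : (b < n)%nat -> b <> a -> m b <= Mexc n m a.
Proof.
  intros Hb Hba. unfold Mexc.
  assert (Hin : In (m b) (map m (filter (fun x => negb (Nat.eqb x a)) (seq 0 n))))
    by now apply in_map, in_excluded.
  now apply (maxl_spec _ (in_nonnil _ _ Hin)).
Qed.

Lemma Mexc_attained : exists b, (b < n)%nat /\ b <> a /\ Mexc n m a = m b.
Proof.
  assert (Hb : exists b, (b < n)%nat /\ b <> a)
    by (destruct (Nat.eq_dec a 0); [exists 1%nat|exists 0%nat]; lia).
  destruct Hb as [b Hb].
  assert (Hin : In (m b) (map m (filter (fun x => negb (Nat.eqb x a)) (seq 0 n))))
    by now apply in_map, in_excluded.
  destruct (maxl_spec _ (in_nonnil _ _ Hin)) as [Hmax _].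
  apply in_map_iff in Hmax as [c [Hc Hin_c]]. apply in_excluded in Hin_c.
  exists c. intuition.
Qed.

Lemma Mexc_char (b : nat) : (b < n)%nat -> b <> a ->
  (forall c, (c < n)%nat -> c <> a -> m c <= m b) -> Mexc n m a = m b.
Proof.
  intros Hb Hba H. apply Rle_antisym; [|now apply Mexc_ge].
  destruct Mexc_attained as [c [Hc [Hca ->]]]. auto.
Qed.
End MaxExcluding.

Section MinOverPairs.
Variables (n : nat) (nu : R) (m : nat -> R).

Let pair_value (p : nat * nat) : R := m (fst p) - nu * m (snd p).

Lemma in_pairs (i j : nat) :
  In (i, j) (filter (fun p : nat * nat => negb (Nat.eqb (fst p) (snd p)))
                    (list_prod (seq 0 n) (seq 0 n)))
  <-> (i < n)%nat /\ (j < n)%nat /\ i <> j.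
Proof.
  rewrite filter_In, in_prod_iff, !in_seq0. simpl.
  destruct (Nat.eqb_spec i j); simpl; intuition.
Qed.

Lemma minpair_le (i j : nat) : (i < n)%nat -> (j < n)%nat -> i <> j ->
  minpair n nu m <= m i - nu * m j.
Proof.
  intros Hi Hj Hij. unfold minpair.
  assert (Hin := in_map pair_value _ (i, j) (proj2 (in_pairs i j) (conj Hi (conj Hj Hij)))).
  now apply (minl_spec _ (in_nonnil _ _ Hin)).
Qed.

Lemma minpair_attained : (2 <= n)%nat -> exists i j, (i < n)%nat /\ (j < n)%nat /\ i <> j /\
  minpair n nu m = m i - nu * m j.
Proof.
  intros Hn. unfold minpair.
  assert (Hin := in_map pair_value _ (0%nat, 1%nat) (proj2 (in_pairs 0 1) ltac:(lia))).
  destruct (minl_spec _ (in_nonnil _ _ Hin)) as [Hmin _].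
  apply in_map_iff in Hmin as [[i j] [Hij Hin_ij]]. apply in_pairs in Hin_ij.
  exists i, j. unfold pair_value in Hij. simpl in Hij. intuition.
Qed.
End MinOverPairs.

(** * Improper integrals over [0, +oo) *)

Lemma is_int0inf_iff (f : R -> R) (l : R) : is_int0inf f l <->
  (forall T, ex_RInt f 0 T) /\ is_lim (fun T => RInt f 0 T) p_infty l.
Proof.
  rewrite <- is_lim_spec. split.
  - intros [pr Hpr]. split; [intros T; apply ex_RInt_Reals_1, pr|].
    intros eps. destruct (Hpr eps (cond_pos eps)) as [M HM]. exists M.
    intros T HT. rewrite (RInt_Reals f 0 T (pr T)). apply HM. lra.
  - intros [Hex Hlim]. exists (fun T => ex_RInt_Reals_0 f 0 T (Hex T)).
    intros eps Heps. destruct (Hlim (mkposreal eps Heps)) as [M HM]. exists (M + 1).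
    intros T HT. rewrite <- RInt_Reals. apply HM. lra.
Qed.

Lemma int0inf_eq (f : R -> R) (l : R) : is_int0inf f l -> int0inf f = l.
Proof.
  intros H. unfold int0inf.
  pose proof (epsilon_spec (inhabits 0) (is_int0inf f) (ex_intro _ l H)) as Hspec.
  apply is_int0inf_iff, proj2, is_lim_unique in H.
  apply is_int0inf_iff, proj2, is_lim_unique in Hspec.
  rewrite H in Hspec. now injection Hspec.
Qed.

Lemma is_int0inf_scal (f : R -> R) (l c : R) :
  is_int0inf f l -> is_int0inf (fun y => c * f y) (c * l).
Proof.
  rewrite !is_int0inf_iff. intros [Hex Hlim]. split.
  - intros T. apply (ex_RInt_scal f 0 T c (Hex T)).
  - apply (is_lim_ext_loc (fun T => c * RInt f 0 T)).
    + exists 0. intros T _. symmetry. apply (RInt_scal f 0 T c (Hex T)).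
    + apply (is_lim_scal_l _ c _ l Hlim).
Qed.

Lemma is_int0inf_plus (f g : R -> R) (l1 l2 : R) :
  is_int0inf f l1 -> is_int0inf g l2 -> is_int0inf (fun y => f y + g y) (l1 + l2).
Proof.
  rewrite !is_int0inf_iff. intros [Hexf Hf] [Hexg Hg]. split.
  - intros T. apply (ex_RInt_plus f g 0 T (Hexf T) (Hexg T)).
  - apply (is_lim_ext_loc (fun T => RInt f 0 T + RInt g 0 T)).
    + exists 0. intros T _. symmetry. apply (RInt_plus f g 0 T (Hexf T) (Hexg T)).
    + now apply is_lim_plus'.
Qed.

Lemma is_int0inf_le (f g : R -> R) (l1 l2 : R) :
  is_int0inf f l1 -> is_int0inf g l2 -> (forall y, 0 <= y -> f y <= g y) -> l1 <= l2.
Proof.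
  rewrite !is_int0inf_iff. intros [Hexf Hf] [Hexg Hg] Hle.
  change (Rbar_le l1 l2).
  apply (is_lim_le_loc (fun T => RInt f 0 T) (fun T => RInt g 0 T) p_infty); auto.
  exists 0. intros T HT. apply RInt_le; auto; [lra|].
  intros y Hy. apply Hle. lra.
Qed.

Section NonnegativeIntegrand.
Variable f : R -> R.
Hypothesis Hex : forall T, ex_RInt f 0 T.
Hypothesis Hpos : forall y, 0 <= y -> 0 <= f y.

Lemma RInt_nondecreasing (T1 T2 : R) : 0 <= T1 <= T2 -> RInt f 0 T1 <= RInt f 0 T2.
Proof.
  intros HT.
  assert (Hex12 : ex_RInt f T1 T2) by (apply (ex_RInt_Chasles_2 f 0 T1 T2); [lra|apply Hex]).
  rewrite <- (RInt_Chasles f 0 T1 T2 (Hex T1) Hex12).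
  assert (0 <= RInt f T1 T2) by (apply RInt_ge_0; auto; [lra|intros x Hx; apply Hpos; lra]).
  change (RInt f 0 T1 <= RInt f 0 T1 + RInt f T1 T2). lra.
Qed.

Lemma RInt_le_int0inf (l : R) : is_int0inf f l -> forall T, 0 <= T -> RInt f 0 T <= l.
Proof.
  intros Hl T HT. apply is_int0inf_iff, proj2 in Hl. change (Rbar_le (RInt f 0 T) l).
  apply (is_lim_le_loc (fun _ => RInt f 0 T) (fun T => RInt f 0 T) p_infty); auto.
  - exists T. intros T' HT'. apply RInt_nondecreasing. lra.
  - apply is_lim_const.
Qed.

Lemma int0inf_exists_bounded (B : R) :
  (forall T, 0 <= T -> RInt f 0 T <= B) -> exists l, is_int0inf f l.
Proof.
  intros HB.
  set (E := fun v => exists T, 0 <= T /\ v = RInt f 0 T).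
  assert (Hbound : bound E) by (exists B; intros v [T [HT ->]]; auto).
  assert (Hne : exists v, E v) by (exists (RInt f 0 0), 0; split; [lra|auto]).
  destruct (completeness E Hbound Hne) as [l [Hub Hlub]].
  exists l. apply is_int0inf_iff. split; auto. apply is_lim_spec. intros eps.
  assert (Hclose : exists T0, 0 <= T0 /\ l - eps < RInt f 0 T0).
  { apply NNPP. intros Hn.
    assert (Hub' : is_upper_bound E (l - eps)).
    { intros v [T [HT ->]]. apply Rnot_lt_le. intros Hlt. apply Hn. now exists T. }
    specialize (Hlub _ Hub'). pose proof (cond_pos eps). lra. }
  destruct Hclose as [T0 [HT0 Hgt]]. exists T0. intros T HT.
  assert (RInt f 0 T <= l) by (apply Hub; exists T; split; auto; lra).
  assert (RInt f 0 T0 <= RInt f 0 T) by (apply RInt_nondecreasing; lra).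
  apply Rabs_def1; lra.
Qed.
End NonnegativeIntegrand.

Lemma is_lim_exp_decay (a : R) : 0 < a -> is_lim (fun T => exp (- a * T)) p_infty 0.
Proof.
  intros Ha. apply is_lim_spec. intros eps. exists (- ln eps / a). intros T HT.
  rewrite Rminus_0_r, Rabs_pos_eq by (left; apply exp_pos).
  rewrite <- (exp_ln eps) by apply cond_pos. apply exp_increasing.
  apply Rmult_lt_compat_l with (r := a) in HT; auto.
  replace (a * (- ln eps / a)) with (- ln eps) in HT by (field; lra). lra.
Qed.

Lemma is_int0inf_exp_tail (f : R -> R) (C K a T0 : R) :
  (forall T, ex_RInt f 0 T) -> 0 < a ->
  (forall T, T0 <= T -> @eq R (RInt f 0 T) (C - K * exp (- a * T))) -> is_int0inf f C.
Proof.
  intros Hex Ha HT. apply is_int0inf_iff. split; auto.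
  apply (is_lim_ext_loc (fun T => C - K * exp (- a * T))).
  { exists T0. intros T HT0. symmetry. apply HT. lra. }
  pose proof (is_lim_minus' (fun _ => C) (fun T => K * exp (- a * T)) p_infty C (K * 0)
                (is_lim_const C p_infty) (is_lim_scal_l _ K _ 0 (is_lim_exp_decay a Ha))) as H.
  now rewrite Rmult_0_r, Rminus_0_r in H.
Qed.

Lemma int0inf_spec (f : R -> R) : (exists l, is_int0inf f l) -> is_int0inf f (int0inf f).
Proof. intros H. exact (epsilon_spec (inhabits 0) (is_int0inf f) H). Qed.

Lemma is_int0inf_dominated (f g : R -> R) (l : R) :
  (forall T, ex_RInt f 0 T) -> (forall y, 0 <= y -> 0 <= f y <= g y) ->
  is_int0inf g l -> is_int0inf f (int0inf f).
Proof.
  intros Hexf Hfg Hg. apply int0inf_spec.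
  pose proof (proj1 (proj1 (is_int0inf_iff g l) Hg)) as Hexg.
  apply (int0inf_exists_bounded f Hexf (fun y Hy => proj1 (Hfg y Hy)) l).
  intros T HT. apply Rle_trans with (RInt g 0 T).
  - apply RInt_le; auto. intros y Hy. apply Hfg. lra.
  - apply (RInt_le_int0inf g Hexg); auto. intros y Hy. pose proof (Hfg y Hy). lra.
Qed.

Lemma RInt_two_pieces (f f1 f2 F1 F2 : R -> R) (y0 T : R) : 0 <= y0 <= T ->
  (forall y, 0 < y < y0 -> f y = f1 y) -> (forall y, y0 < y < T -> f y = f2 y) ->
  (forall y, 0 <= y <= y0 -> is_derive F1 y (f1 y) /\ continuous f1 y) ->
  (forall y, y0 <= y <= T -> is_derive F2 y (f2 y) /\ continuous f2 y) ->
  @eq R (RInt f 0 T) ((F1 y0 - F1 0) + (F2 T - F2 y0)).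
Proof.
  intros Hy Hf1 Hf2 D1 D2. apply is_RInt_unique, (is_RInt_Chasles f 0 y0 T).
  - apply (is_RInt_ext f1).
    { rewrite Rmin_left, Rmax_right by lra. intros x Hx. symmetry. apply Hf1. lra. }
    apply (is_RInt_derive F1 f1); rewrite Rmin_left, Rmax_right by lra; intros; apply D1; lra.
  - apply (is_RInt_ext f2).
    { rewrite Rmin_left, Rmax_right by lra. intros x Hx. symmetry. apply Hf2. lra. }
    apply (is_RInt_derive F2 f2); rewrite Rmin_left, Rmax_right by lra; intros; apply D2; lra.
Qed.

Lemma ex_RInt_of_continuous (f : R -> R) : (forall x, continuous f x) -> forall a b, ex_RInt f a b.
Proof. intros H a b. apply (@ex_RInt_continuous R_CompleteNormedModule). intros; apply H. Qed.

Lemma continuous_Rplus (f g : R -> R) (x : R) :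
  continuous f x -> continuous g x -> continuous (fun y => f y + g y) x.
Proof. exact (continuous_plus f g x). Qed.

Lemma continuous_Rmult (f g : R -> R) (x : R) :
  continuous f x -> continuous g x -> continuous (fun y => f y * g y) x.
Proof. exact (continuous_mult f g x). Qed.

Lemma continuous_of_ex_derive (f : R -> R) (x : R) : ex_derive f x -> continuous f x.
Proof. exact (@ex_derive_continuous R_AbsRing R_NormedModule f x). Qed.

Lemma continuous_Rmax (f g : R -> R) (x : R) :
  continuous f x -> continuous g x -> continuous (fun y => Rmax (f y) (g y)) x.
Proof.
  intros Hf Hg.
  apply (continuous_ext (fun y => (f y + g y + Rabs (f y + - g y)) * / 2)).
  { intros y. unfold Rmax, Rabs. destruct (Rle_dec (f y) (g y)), (Rcase_abs (f y + - g y)); lra. }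
  apply continuous_Rmult; [|apply continuous_const].
  apply continuous_Rplus; [now apply continuous_Rplus|].
  apply continuous_Rabs_comp, continuous_Rplus; auto.
  exact (continuous_opp g x Hg).
Qed.

Lemma continuous_Rmin (f g : R -> R) (x : R) :
  continuous f x -> continuous g x -> continuous (fun y => Rmin (f y) (g y)) x.
Proof.
  intros Hf Hg.
  apply (continuous_ext (fun y => - Rmax (- f y) (- g y))).
  { intros y. unfold Rmax, Rmin. destruct (Rle_dec (- f y) (- g y)), (Rle_dec (f y) (g y)); lra. }
  apply (continuous_opp (fun y => Rmax (- f y) (- g y))).
  apply continuous_Rmax; [exact (continuous_opp f x Hf)|exact (continuous_opp g x Hg)].
Qed.

(* A function whose ratios satisfy F(y') <= exp(c |y' - y|) F(y) is continuous:
   it is squeezed between exp(-c|y-x|) F(x) and exp(c|y-x|) F(x). *)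
Lemma continuous_of_exp_modulus (F : R -> R) (c x : R) :
  (forall y y', F y' <= exp (c * Rabs (y' - y)) * F y) -> continuous F x.
Proof.
  intros Hmod.
  assert (Hbound : forall s, filterlim (fun y => exp (s * Rabs (y - x)) * F x)
                                        (locally x) (locally (F x))).
  { intros s.
    assert (Hc : continuous (fun y => exp (s * Rabs (y - x)) * F x) x).
    { apply continuous_Rmult; [|apply continuous_const].
      apply (continuous_comp (fun y => s * Rabs (y - x)) exp).
      - apply continuous_Rmult; [apply continuous_const|].
        apply continuous_Rabs_comp, continuous_of_ex_derive. auto_derive. auto.
      - apply continuous_of_ex_derive. auto_derive. auto. }
    unfold continuous in Hc.
    now rewrite Rminus_diag, Rabs_R0, Rmult_0_r, exp_0, Rmult_1_l in Hc. }
  apply (filterlim_le_le (F := locally x) (fun y => exp (- c * Rabs (y - x)) * F x) F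
                         (fun y => exp (c * Rabs (y - x)) * F x) (F x));
    [|apply Hbound|apply Hbound].
  apply filter_forall. intros y. split; [|apply Hmod].
  specialize (Hmod y x). rewrite Rabs_minus_sym in Hmod.
  apply Rmult_le_compat_l with (r := exp (- c * Rabs (y - x))) in Hmod; [|left; apply exp_pos].
  rewrite <- Rmult_assoc, <- exp_plus in Hmod.
  replace (- c * Rabs (y - x) + c * Rabs (y - x)) with 0 in Hmod by ring.
  rewrite exp_0, Rmult_1_l in Hmod. exact Hmod.
Qed.

Lemma nondecreasing_of_derive (f df : R -> R) (a b : R) : a <= b ->
  (forall x, is_derive f x (df x)) -> (forall x, a <= x <= b -> 0 <= df x) -> f a <= f b.
Proof.
  intros Hab Hd Hpos.
  destruct (MVT_gen f a b df) as [c [Hc Heq]].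
  - intros x _. apply Hd.
  - intros x _. apply continuity_pt_filterlim, continuous_of_ex_derive. exists (df x). apply Hd.
  - rewrite Rmin_left, Rmax_right in Hc by lra.
    pose proof (Rmult_le_pos (df c) (b - a) (Hpos c Hc) ltac:(lra)). lra.
Qed.

Lemma exp_le (a b : R) : a <= b -> exp a <= exp b.
Proof. intros [H|H]; [left; now apply exp_increasing|rewrite H; lra]. Qed.

(** * The two explicit integrals behind xi(nu) and g(nu) *)
Section ExplicitIntegrals.
Variable nu : R.
Hypothesis Hnu : 0 < nu < 1.

Lemma ln_nu_neg : ln nu < 0.
Proof. rewrite <- ln_1. apply ln_increasing; lra. Qed.

Lemma hnu_alt : hnu nu = (1 - nu) * exp (nu / (1 - nu) * ln nu).
Proof.
  unfold hnu. replace (ln nu / (1 - nu)) with (nu / (1 - nu) * ln nu + ln nu) by (field; lra).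
  rewrite exp_plus, exp_ln by lra. ring.
Qed.

Lemma hnu_pos : 0 < hnu nu.
Proof. rewrite hnu_alt. apply Rmult_lt_0_compat; [lra|apply exp_pos]. Qed.

Lemma gnu_pos : 0 < gnu nu.
Proof.
  unfold gnu. apply Rmult_lt_0_compat; [apply exp_pos|].
  assert (0 < 1 / (1 + nu)) by (apply Rdiv_lt_0_compat; lra).
  assert (ln nu / (1 - nu) < 0)
    by (apply Rdiv_neg_pos; [apply ln_nu_neg|lra]).
  lra.
Qed.

(* The change of variables m[a] -> m[a] + J(y) turns the density nu e^{-nu y} into e^{-y}. *)
Lemma exp_J_mul (ma y : R) : exp (ma + J nu y) * exp (- y) = exp ma * nu * exp (- nu * y).
Proof.
  rewrite <- exp_plus. unfold J.
  replace (ma + ((1 - nu) * y + ln nu) + - y) with (ma + ln nu + - nu * y) by ring.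
  rewrite !exp_plus, exp_ln by lra. ring.
Qed.

Lemma J_sign (c y y0 : R) : c + J nu y = (1 - nu) * (y - y0) ->
  (y < y0 -> c + J nu y < 0) /\ (y0 < y -> 0 < c + J nu y).
Proof.
  intros HJ. rewrite HJ. split; intros Hy.
  - apply Rmult_pos_neg; lra.
  - apply Rmult_lt_0_compat; lra.
Qed.

Lemma is_int0inf_Rmax_exp (M ma y0 : R) : 0 <= y0 ->
  (forall y, 0 < y < y0 -> exp (ma + J nu y) <= exp M) ->
  (forall y, y0 < y -> exp M <= exp (ma + J nu y)) ->
  is_int0inf (fun y => Rmax (exp M) (exp (ma + J nu y)) * exp (- y))
             (exp M - exp M * exp (- y0) + exp ma * exp (- nu * y0)).
Proof.
  intros Hy0 Hbefore Hafter.
  set (f := fun y => Rmax (exp M) (exp (ma + J nu y)) * exp (- y)).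
  assert (Hex : forall T, ex_RInt f 0 T).
  { apply ex_RInt_of_continuous. intros x. unfold f.
    apply continuous_Rmult; [apply continuous_Rmax; [apply continuous_const|]|];
      apply continuous_of_ex_derive; unfold J; auto_derive; auto. }
  apply (is_int0inf_exp_tail f _ (exp ma) nu y0 Hex); [lra|].
  intros T HT.
  rewrite (RInt_two_pieces f (fun y => exp M * exp (- y)) (fun y => exp ma * nu * exp (- nu * y))
             (fun y => - exp M * exp (- y)) (fun y => - exp ma * exp (- nu * y)) y0 T); try lra.
  - rewrite Ropp_0, exp_0. ring.
  - intros y Hy. unfold f. rewrite Rmax_left by (apply Hbefore; lra). reflexivity.
  - intros y Hy. unfold f. rewrite Rmax_right by (apply Hafter; lra). apply exp_J_mul.
  - intros y _. split; [auto_derive; auto; ring|].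
    apply continuous_of_ex_derive. auto_derive. auto.
  - intros y _. split; [auto_derive; auto; ring|].
    apply continuous_of_ex_derive. auto_derive. auto.
Qed.

Definition xi_of (M ma : R) : R :=
  if Rlt_dec (M - ma) (ln nu) then exp ma
  else exp M + hnu nu * exp ((ma - nu * M) / (1 - nu)).

Lemma is_int0inf_xi (M ma : R) :
  is_int0inf (fun y => Rmax (exp M) (exp (ma + J nu y)) * exp (- y)) (xi_of M ma).
Proof.
  unfold xi_of. destruct (Rlt_dec (M - ma) (ln nu)) as [Hlt|Hge].
  - replace (exp ma) with (exp M - exp M * exp (- 0) + exp ma * exp (- nu * 0))
      by (rewrite Ropp_0, Rmult_0_r, exp_0; ring).
    apply is_int0inf_Rmax_exp; [lra|intros; lra|].
    intros y Hy. apply exp_le. unfold J.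
    pose proof (Rmult_le_pos (1 - nu) y ltac:(lra) ltac:(lra)). lra.
  - set (y0 := (M - ma - ln nu) / (1 - nu)).
    assert (HJ : forall y, (ma - M) + J nu y = (1 - nu) * (y - y0))
      by (intros y; unfold J, y0; field; lra).
    replace (exp M + hnu nu * exp ((ma - nu * M) / (1 - nu)))
      with (exp M - exp M * exp (- y0) + exp ma * exp (- nu * y0)).
    + apply is_int0inf_Rmax_exp.
      * unfold y0. apply Rdiv_le_0_compat; lra.
      * intros y Hy. apply exp_le. pose proof (proj1 (J_sign _ y y0 (HJ y)) (proj2 Hy)). lra.
      * intros y Hy. apply exp_le. pose proof (proj2 (J_sign _ y y0 (HJ y)) Hy). lra.
    + unfold hnu. rewrite Rmult_minus_distr_r, <- !exp_plus.
      replace (nu / (1 - nu) * ln nu + (ma - nu * M) / (1 - nu)) with (ma + - nu * y0)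
        by (unfold y0; field; lra).
      replace (ln nu / (1 - nu) + (ma - nu * M) / (1 - nu)) with (M + - y0)
        by (unfold y0; field; lra).
      ring.
Qed.

(* phi(y) = exp(min(J(y), -nu J(y)) / (1 - nu)) bounds how much the pair minimum
   defining the lower bound can decrease when one coordinate is shifted by J(y). *)
Definition phi (y : R) : R := exp (Rmin (J nu y) (- nu * J nu y) / (1 - nu)).

Lemma is_int0inf_phi : is_int0inf (fun y => phi y * exp (- y)) (gnu nu).
Proof.
  set (f := fun y => phi y * exp (- y)).
  assert (Hex : forall T, ex_RInt f 0 T).
  { apply ex_RInt_of_continuous. intros x. unfold f, phi.
    apply continuous_Rmult; [|apply continuous_of_ex_derive; auto_derive; auto].
    apply (continuous_comp (fun y => Rmin (J nu y) (- nu * J nu y)) (fun z => exp (z / (1 - nu)))).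
    - apply continuous_Rmin; apply continuous_of_ex_derive; unfold J; auto_derive; auto.
    - apply continuous_of_ex_derive. auto_derive. auto. }
  pose proof ln_nu_neg.
  set (y0 := - ln nu / (1 - nu)).
  assert (Hy0 : 0 < y0) by (apply Rdiv_lt_0_compat; lra).
  assert (HJ : forall y, 0 + J nu y = (1 - nu) * (y - y0)) by (intros y; unfold J, y0; field; lra).
  set (K1 := exp (ln nu / (1 - nu))).
  set (K2 := exp (- nu * ln nu / (1 - nu))).
  assert (Hmatch : K2 * exp (- (1 + nu) * y0) = K1)
    by (unfold K1, K2; rewrite <- exp_plus; f_equal; unfold y0; field; lra).
  replace (gnu nu) with (K1 * y0 + K2 / (1 + nu) * exp (- (1 + nu) * y0)).
  2: { replace (K2 / (1 + nu) * exp (- (1 + nu) * y0)) with (K1 / (1 + nu))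
         by (rewrite <- Hmatch; field; lra).
       unfold gnu. fold K1. unfold y0. field. lra. }
  apply (is_int0inf_exp_tail f _ (K2 / (1 + nu)) (1 + nu) y0 Hex); [lra|].
  intros T HT.
  rewrite (RInt_two_pieces f (fun _ => K1) (fun y => K2 * exp (- (1 + nu) * y))
             (fun y => K1 * y) (fun y => - K2 / (1 + nu) * exp (- (1 + nu) * y)) y0 T); try lra.
  - intros y Hy. unfold f, phi. pose proof (proj1 (J_sign 0 y y0 (HJ y)) (proj2 Hy)).
    rewrite Rmin_left by (pose proof (Rmult_le_pos nu (- J nu y) ltac:(lra) ltac:(lra)); lra).
    unfold K1. rewrite <- exp_plus. f_equal. unfold J. field. lra.
  - intros y Hy. unfold f, phi. pose proof (proj2 (J_sign 0 y y0 (HJ y)) (proj1 Hy)).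
    rewrite Rmin_right by (pose proof (Rmult_le_pos nu (J nu y) ltac:(lra) ltac:(lra)); lra).
    unfold K2. rewrite <- !exp_plus. f_equal. unfold J. field. lra.
  - intros y _. split; [auto_derive; auto; ring|apply continuous_const].
  - intros y _. split; [auto_derive; auto; field; lra|].
    apply continuous_of_ex_derive. auto_derive. auto.
Qed.
End ExplicitIntegrals.

(** * The comparison inequality for xi *)

(* With beta = 1/(1-nu), gamma = nu/(1-nu) and h = h(nu), the function
     psi(d) = e^d - 1 - h (e^{beta d} - e^{-gamma d})
   vanishes at 0 and is nonnegative at -ln nu; its derivative e^d (1 - h k(d)) has
   k nondecreasing on [0, oo), so psi is unimodal and nonnegative on [0, -ln nu]. *)
Section UnimodalPsi.
Variable nu : R.
Hypothesis Hnu : 0 < nu < 1.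

Let beta : R := 1 / (1 - nu).
Let gamma : R := nu / (1 - nu).

Definition kappa (s : R) : R := beta * exp (gamma * s) + gamma * exp (- beta * s).
Definition psi (s : R) : R := exp s - 1 - hnu nu * (exp (beta * s) - exp (- gamma * s)).

(* k(s) = beta e^{gamma s} + gamma e^{-beta s} has derivative beta gamma (e^{gamma s} - e^{-beta s}) >= 0. *)
Lemma kappa_nondecreasing (s t : R) : 0 <= s <= t -> kappa s <= kappa t.
Proof.
  intros Hst.
  apply (nondecreasing_of_derive kappa
           (fun x => beta * gamma * (exp (gamma * x) - exp (- beta * x)))); [lra| |].
  - intros x. unfold kappa. auto_derive; auto. ring.
  - intros x Hx.
    assert (0 < beta) by (apply Rdiv_lt_0_compat; lra).
    assert (0 < gamma) by (apply Rdiv_lt_0_compat; lra).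
    assert (exp (- beta * x) <= exp (gamma * x))
      by (apply exp_le; pose proof (Rmult_le_pos beta x); pose proof (Rmult_le_pos gamma x); lra).
    apply Rmult_le_pos; [apply Rmult_le_pos|]; lra.
Qed.

Lemma psi_derive (s : R) : is_derive psi s (exp s * (1 - hnu nu * kappa s)).
Proof.
  assert (Hbg : beta = 1 + gamma) by (unfold beta, gamma; field; lra).
  unfold psi, kappa. auto_derive; auto.
  replace (beta * s) with (s + gamma * s) by (rewrite Hbg; ring).
  replace (- gamma * s) with (s + - beta * s) by (rewrite Hbg; ring).
  rewrite !exp_plus, Hbg. ring.
Qed.

(* psi(-ln nu) = (1 - nu) nu^{2 nu/(1-nu)} >= 0. *)
Lemma psi_at_minus_ln_nu : 0 <= psi (- ln nu).
Proof.
  unfold psi. set (P := exp (nu / (1 - nu) * ln nu)).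
  assert (HP : 0 < P) by apply exp_pos.
  assert (E1 : exp (- ln nu) = / nu) by (rewrite exp_Ropp, exp_ln by lra; reflexivity).
  assert (E2 : exp (- gamma * - ln nu) = P) by (unfold P, gamma; f_equal; ring).
  assert (E3 : exp (beta * - ln nu) = / (nu * P)).
  { replace (beta * - ln nu) with (- (ln nu + nu / (1 - nu) * ln nu)) by (unfold beta; field; lra).
    rewrite exp_Ropp, exp_plus, exp_ln by lra. reflexivity. }
  rewrite hnu_alt, E1, E2, E3 by auto. fold P.
  replace (/ nu - 1 - (1 - nu) * P * (/ (nu * P) - P)) with ((1 - nu) * (P * P)) by (field; lra).
  apply Rmult_le_pos; nra.
Qed.

Lemma psi_nonneg (d : R) : 0 <= d <= - ln nu -> 0 <= psi d.
Proof.
  intros Hd. pose proof (hnu_pos nu Hnu) as Hh.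
  destruct (Rle_dec 0 (1 - hnu nu * kappa d)) as [Hup|Hdown].
  - (* psi is nondecreasing on [0, d] *)
    replace 0 with (psi 0) at 1 by (unfold psi; rewrite !Rmult_0_r, exp_0; ring).
    apply (nondecreasing_of_derive psi (fun s => exp s * (1 - hnu nu * kappa s)) 0 d);
      [lra|apply psi_derive|].
    intros x Hx. apply Rmult_le_pos; [left; apply exp_pos|].
    pose proof (kappa_nondecreasing x d ltac:(lra)). nra.
  - (* psi is nonincreasing on [d, -ln nu] *)
    apply Rle_trans with (psi (- ln nu)); [apply psi_at_minus_ln_nu|].
    apply Ropp_le_cancel.
    apply (nondecreasing_of_derive (fun s => - psi s)
             (fun s => - (exp s * (1 - hnu nu * kappa s))) d (- ln nu)); [lra| |].
    + intros x. apply (is_derive_opp psi), psi_derive.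
    + intros x Hx. pose proof (exp_pos x).
      pose proof (Rmult_le_compat_l _ _ _ (Rlt_le _ _ Hh) (kappa_nondecreasing d x ltac:(lra))).
      nra.
Qed.

Lemma xi_branch_order (m1 m2 : R) : m2 <= m1 -> ln nu <= m2 - m1 ->
  exp m2 + hnu nu * exp ((m1 - nu * m2) / (1 - nu))
  <= exp m1 + hnu nu * exp ((m2 - nu * m1) / (1 - nu)).
Proof.
  intros H12 Hln. pose proof (psi_nonneg (m1 - m2) ltac:(lra)) as Hpsi. unfold psi in Hpsi.
  apply Rmult_le_compat_l with (r := exp m2) in Hpsi; [|left; apply exp_pos].
  replace (exp m1) with (exp m2 * exp (m1 - m2)) by (rewrite <- exp_plus; f_equal; ring).
  replace (exp ((m1 - nu * m2) / (1 - nu))) with (exp m2 * exp (beta * (m1 - m2)))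
    by (rewrite <- exp_plus; f_equal; unfold beta; field; lra).
  replace (exp ((m2 - nu * m1) / (1 - nu))) with (exp m2 * exp (- gamma * (m1 - m2)))
    by (rewrite <- exp_plus; f_equal; unfold gamma; field; lra).
  nra.
Qed.
End UnimodalPsi.

Lemma sumexp_S (n : nat) (m : nat -> R) : sumexp (S n) m = sumexp n m + exp (m n).
Proof.
  unfold sumexp. rewrite seq_S, map_app, fold_right_app. simpl.
  rewrite Rplus_0_r. generalize (exp (m n)). intros c.
  induction (map (fun l => exp (m l)) (seq 0 n)) as [|x t IH]; simpl; [ring|rewrite IH; ring].
Qed.

Lemma sumexp_ext (n : nat) (m m' : nat -> R) :
  (forall x, (x < n)%nat -> m x = m' x) -> sumexp n m = sumexp n m'.
Proof.
  intros H. unfold sumexp. f_equal. apply map_ext_in. intros a Ha. rewrite H; auto.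
  now apply in_seq0.
Qed.

Lemma sumexp_pos (n : nat) (m : nat -> R) : (1 <= n)%nat -> 0 < sumexp n m.
Proof.
  induction n as [|n IH]; intros Hn; [lia|]. rewrite sumexp_S. pose proof (exp_pos (m n)).
  destruct n; [unfold sumexp; simpl; lra|]. pose proof (IH ltac:(lia)). lra.
Qed.

Lemma sumexp_shift (n : nat) (m : nat -> R) (a : nat) (t : R) : (a < n)%nat ->
  sumexp n (shift m a t) = sumexp n m - exp (m a) + exp (m a + t).
Proof.
  induction n as [|n IH]; intros Ha; [lia|]. rewrite !sumexp_S.
  destruct (Nat.eq_dec a n) as [->|Hne].
  - rewrite (sumexp_ext n (shift m n t) m).
    + unfold shift, delta. rewrite Nat.eqb_refl, Rmult_1_r. ring.
    + intros x Hx. unfold shift, delta. destruct (Nat.eqb_spec x n); [lia|ring].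
  - rewrite IH by lia. unfold shift at 1, delta.
    destruct (Nat.eqb_spec n a); [lia|]. rewrite Rmult_0_r, Rplus_0_r. ring.
Qed.

Fixpoint geom_partial (g : R) (j : nat) : R :=
  match j with O => 0 | S j => 1 + g * geom_partial g j end.

Lemma geomsum_partial (g : R) (j : nat) : geomsum g j = g * geom_partial g j.
Proof.
  induction j as [|j IH]; [unfold geomsum; simpl; ring|].
  assert (Hscal : forall l : list nat, fold_right Rplus 0 (map (fun i => g * g ^ i) l)
                                       = g * fold_right Rplus 0 (map (fun i => g ^ i) l))
    by (induction l as [|i l IHl]; simpl; [ring|rewrite IHl; ring]).
  unfold geomsum in *. simpl. rewrite <- seq_shift, map_map. simpl. rewrite Hscal, IH. ring.
Qed.

Lemma geom_partial_nonneg (g : R) (j : nat) : 0 <= g -> 0 <= geom_partial g j.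
Proof.
  intros Hg. induction j as [|j IH]; simpl; [lra|].
  pose proof (Rmult_le_pos _ _ Hg IH). lra.
Qed.

(** * The value recursion *)
Section ValueRecursion.
Variable n : nat.
Variable nu : R.
Hypothesis Hn : (2 <= n)%nat.
Hypothesis Hnu : 0 < nu < 1.

Let Hn1 : (1 <= n)%nat.
Proof. lia. Qed.

Definition Emax (m : nat -> R) : R := maxI n (fun b => exp (m b)).

Definition W (j : nat) (m : nat -> R) : R := Vrev n nu j m * sumexp n m.

(* The unnormalized Q-function: q with j remaining steps after this one is Q / sum_l e^{m[l]}. *)
Definition Q (j : nat) (m : nat -> R) (a : nat) : R :=
  int0inf (fun y => W j (shift m a (J nu y)) * exp (- y)).

Definition cmin (m : nat -> R) : R := exp (minpair n nu m / (1 - nu)).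

Definition le_on (m m' : nat -> R) : Prop := forall x, (x < n)%nat -> m x <= m' x.

Definition translate (m : nat -> R) (t : R) : nat -> R := fun x => m x + t.

Lemma Emax_pos (m : nat -> R) : 0 < Emax m.
Proof.
  apply Rlt_le_trans with (exp (m 0%nat)); [apply exp_pos|].
  apply (maxI_ge n (fun b => exp (m b))). lia.
Qed.

Lemma Emax_shift (m : nat -> R) (a : nat) (t : R) : (a < n)%nat ->
  Emax (shift m a t) = Rmax (exp (Mexc n m a)) (exp (m a + t)).
Proof.
  intros Ha. unfold Emax, shift, delta. apply Rle_antisym.
  - apply maxI_le; auto. intros b Hb. destruct (Nat.eqb_spec b a) as [->|Hne].
    + rewrite Rmult_1_r. apply Rmax_r.
    + rewrite Rmult_0_r, Rplus_0_r. eapply Rle_trans; [|apply Rmax_l].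
      apply exp_le, Mexc_ge; auto.
  - apply Rmax_lub.
    + destruct (Mexc_attained n m a Hn) as [b [Hb [Hba ->]]].
      eapply Rle_trans; [|apply (maxI_ge n _ b Hb)]. simpl.
      destruct (Nat.eqb_spec b a); [lia|]. rewrite Rmult_0_r, Rplus_0_r. lra.
    + eapply Rle_trans; [|apply (maxI_ge n _ a Ha)]. simpl.
      rewrite Nat.eqb_refl, Rmult_1_r. lra.
Qed.

Lemma Emax_translate (m : nat -> R) (t : R) : Emax (translate m t) = exp t * Emax m.
Proof.
  unfold Emax, translate. rewrite <- maxI_scal by (auto; left; apply exp_pos).
  apply maxI_ext. intros a _. rewrite exp_plus. ring.
Qed.

Lemma is_int0inf_Emax_shift (m : nat -> R) (a : nat) : (a < n)%nat ->
  is_int0inf (fun y => Emax (shift m a (J nu y)) * exp (- y)) (xi n nu a m).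
Proof.
  intros Ha.
  replace (fun y => Emax (shift m a (J nu y)) * exp (- y))
    with (fun y => Rmax (exp (Mexc n m a)) (exp (m a + J nu y)) * exp (- y))
    by (apply functional_extensionality; intros y; now rewrite Emax_shift).
  apply (is_int0inf_xi nu Hnu).
Qed.

(* Bayes' rule in unnormalized form: the observation density, divided by the new
   partition function, is e^{-y} divided by the old one. *)
Lemma density_normalization (j : nat) (m : nat -> R) (a : nat) (y : R) : (a < n)%nat ->
  Vrev n nu j (shift m a (J nu y)) * dens n nu m a y
  = / sumexp n m * (W j (shift m a (J nu y)) * exp (- y)).
Proof.
  intros Ha. unfold W, dens, pa. rewrite sumexp_shift by auto.
  pose proof (sumexp_pos n m Hn1).
  pose proof (exp_J_mul nu Hnu (m a) y) as HJ.
  transitivity (/ sumexp n m * Vrev n nu j (shift m a (J nu y))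
                * ((sumexp n m - exp (m a)) * exp (- y) + exp (m a + J nu y) * exp (- y))).
  - rewrite HJ. field. lra.
  - ring.
Qed.

Lemma cmin_shift (m : nat -> R) (a : nat) (t : R) : (a < n)%nat ->
  cmin m * exp (Rmin t (- nu * t) / (1 - nu)) <= cmin (shift m a t).
Proof.
  intros Ha. unfold cmin. rewrite <- exp_plus. apply exp_le.
  replace (minpair n nu m / (1 - nu) + Rmin t (- nu * t) / (1 - nu))
    with ((minpair n nu m + Rmin t (- nu * t)) / (1 - nu)) by (field; lra).
  apply Rmult_le_compat_r; [left; apply Rinv_0_lt_compat; lra|].
  destruct (minpair_attained n nu (shift m a t) Hn) as [i [j [Hi [Hj [Hij ->]]]]].
  pose proof (minpair_le n nu m i j Hi Hj Hij).
  pose proof (Rmin_l t (- nu * t)). pose proof (Rmin_r t (- nu * t)).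
  assert (Rmin t (- nu * t) <= 0) by (destruct (Rle_dec 0 t); nra).
  unfold shift, delta. destruct (Nat.eqb_spec i a), (Nat.eqb_spec j a); try lia; lra.
Qed.

Section TopTwo.
Variables (m : nat -> R) (x1 x2 : nat).
Hypotheses (Hx1 : (x1 < n)%nat) (Hx2 : (x2 < n)%nat) (H12 : x1 <> x2)
  (Hbest : forall y, (y < n)%nat -> m y <= m x1)
  (Hsecond : forall y, (y < n)%nat -> y <> x1 -> m y <= m x2).

Lemma Emax_top : Emax m = exp (m x1).
Proof. apply (maxI_at n Hn1 (fun b => exp (m b))); auto. intros a Ha. apply exp_le; auto. Qed.

(* For a <> x1 the threshold test in xi fails, since m[x1] - m[a] >= 0 > ln nu. *)
Lemma xi_not_top (a : nat) : (a < n)%nat -> a <> x1 ->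
  xi n nu a m = exp (m x1) + hnu nu * exp ((m a - nu * m x1) / (1 - nu)).
Proof.
  intros Ha Hax. change (xi n nu a m) with (xi_of nu (Mexc n m a) (m a)). unfold xi_of.
  rewrite (Mexc_char n m a Hn x1) by auto.
  pose proof (ln_nu_neg nu Hnu). pose proof (Hbest a Ha).
  destruct (Rlt_dec (m x1 - m a) (ln nu)); [lra|auto].
Qed.

Lemma xi_le_second (a : nat) : (a < n)%nat -> xi n nu a m <= xi n nu x2 m.
Proof.
  intros Ha. rewrite (xi_not_top x2) by auto. pose proof (hnu_pos nu Hnu).
  destruct (Nat.eq_dec a x1) as [->|Hax].
  - change (xi n nu x1 m) with (xi_of nu (Mexc n m x1) (m x1)). unfold xi_of.
    rewrite (Mexc_char n m x1 Hn x2) by auto.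
    destruct (Rlt_dec (m x2 - m x1) (ln nu)).
    + pose proof (exp_pos ((m x2 - nu * m x1) / (1 - nu))). nra.
    + apply xi_branch_order; auto. lra.
  - rewrite xi_not_top by auto. apply Rplus_le_compat_l, Rmult_le_compat_l; [lra|].
    apply exp_le, Rmult_le_compat_r; [left; apply Rinv_0_lt_compat; lra|].
    assert (m a <= m x2) by (destruct (Nat.eq_dec a x2) as [->|]; [lra|auto]). lra.
Qed.

(* At the second-best index xi is at most (1 + h) Emax, as m[x2] - nu m[x1] <= (1 - nu) m[x1]. *)
Lemma xi_second_upper : xi n nu x2 m <= (1 + hnu nu) * Emax m.
Proof.
  rewrite xi_not_top, Emax_top by auto. pose proof (hnu_pos nu Hnu).
  assert (exp ((m x2 - nu * m x1) / (1 - nu)) <= exp (m x1)).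
  { apply exp_le. apply Rmult_le_reg_r with (1 - nu); [lra|]. unfold Rdiv.
    rewrite Rmult_assoc, Rinv_l, Rmult_1_r by lra. pose proof (Hbest x2 Hx2). nra. }
  nra.
Qed.

(* At the second-best index xi is at least Emax + h cmin, as cmin involves the pair (x2, x1). *)
Lemma xi_second_lower : Emax m + hnu nu * cmin m <= xi n nu x2 m.
Proof.
  rewrite xi_not_top, Emax_top by auto.
  apply Rplus_le_compat_l, Rmult_le_compat_l; [left; apply hnu_pos; auto|].
  apply exp_le, Rmult_le_compat_r; [left; apply Rinv_0_lt_compat; lra|].
  apply minpair_le; auto.
Qed.
End TopTwo.

Lemma top_two_exist (m : nat -> R) : exists x1 x2, (x1 < n)%nat /\ (x2 < n)%nat /\ x1 <> x2 /\
  (forall y, (y < n)%nat -> m y <= m x1) /\ (forall y, (y < n)%nat -> y <> x1 -> m y <= m x2).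
Proof.
  destruct (maxI_attained n Hn1 m) as [x1 [Hx1 Hm1]].
  destruct (Mexc_attained n m x1 Hn) as [x2 [Hx2 [H21 Hm2]]].
  exists x1, x2. repeat split; auto.
  - intros y Hy. rewrite <- Hm1. now apply maxI_ge.
  - intros y Hy Hyx. rewrite <- Hm2. now apply Mexc_ge.
Qed.

Lemma xi_upper (m : nat -> R) (a : nat) : (a < n)%nat -> xi n nu a m <= (1 + hnu nu) * Emax m.
Proof.
  intros Ha. destruct (top_two_exist m) as [x1 [x2 [H1 [H2 [H3 [H4 H5]]]]]].
  eapply Rle_trans; [apply (xi_le_second m x1 x2)|apply (xi_second_upper m x1 x2)]; auto.
Qed.

Record Invariant (j : nat) : Prop := {
  inv_mono : forall m m', le_on m m' -> W j m <= W j m';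
  inv_translate : forall m t, W j (translate m t) = exp t * W j m;
  inv_lower : forall m, Emax m + hnu nu * cmin m * geom_partial (gnu nu) j <= W j m;
  inv_upper : forall m, W j m <= (1 + hnu nu) ^ j * Emax m }.

Lemma W_zero (m : nat -> R) : W 0 m = Emax m.
Proof.
  unfold W, Emax. simpl. pose proof (sumexp_pos n m Hn1).
  rewrite (maxI_ext n (fun a => pa n m a) (fun a => / sumexp n m * exp (m a)))
    by (intros a _; unfold pa, Rdiv; ring).
  rewrite maxI_scal by (auto; left; apply Rinv_0_lt_compat; lra). field. lra.
Qed.

Lemma invariant_zero : Invariant 0.
Proof.
  split; intros m; rewrite ?W_zero; simpl.
  - intros m' Hle. rewrite W_zero. apply maxI_mono; auto. intros a Ha. apply exp_le; auto.
  - intros t. rewrite W_zero. apply Emax_translate.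
  - lra.
  - lra.
Qed.

Section InductionStep.
Variable j : nat.
Hypothesis Hinv : Invariant j.

Let integrand (m : nat -> R) (a : nat) (y : R) : R := W j (shift m a (J nu y)) * exp (- y).

(* The lower bound makes W nonnegative. *)
Lemma W_nonneg (m : nat -> R) : 0 <= W j m.
Proof.
  pose proof (inv_lower j Hinv m). pose proof (Emax_pos m). pose proof (hnu_pos nu Hnu).
  assert (0 < cmin m) by apply exp_pos.
  pose proof (geom_partial_nonneg (gnu nu) j (Rlt_le _ _ (gnu_pos nu Hnu))).
  assert (0 <= hnu nu * cmin m * geom_partial (gnu nu) j)
    by (apply Rmult_le_pos; [apply Rmult_le_pos|]; lra).
  lra.
Qed.

(* Monotonicity and translation give W(shift m a J(y')) <= e^{(1-nu)|y'-y|} W(shift m a J(y)),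
   hence continuity in y. *)
Lemma integrand_continuous (m : nat -> R) (a : nat) (x : R) : (a < n)%nat ->
  continuous (integrand m a) x.
Proof.
  intros Ha. apply continuous_Rmult; [|apply continuous_of_ex_derive; auto_derive; auto].
  apply (continuous_of_exp_modulus _ (1 - nu)). intros y y'.
  rewrite <- (inv_translate j Hinv). apply (inv_mono j Hinv).
  intros x' Hx'. unfold shift, translate, delta, J.
  replace ((1 - nu) * Rabs (y' - y)) with (Rabs ((1 - nu) * y' - (1 - nu) * y))
    by (rewrite <- Rmult_minus_distr_l, Rabs_mult, Rabs_pos_eq by lra; reflexivity).
  pose proof (Rle_abs ((1 - nu) * y' - (1 - nu) * y)). pose proof (Rabs_pos ((1 - nu) * y' - (1 - nu) * y)).
  destruct (Nat.eqb x' a); lra.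
Qed.

(* The integral defining Q exists: the integrand is dominated by (1+h)^j times the
   integrand of xi. *)
Lemma is_int0inf_Q (m : nat -> R) (a : nat) : (a < n)%nat ->
  is_int0inf (integrand m a) (Q j m a).
Proof.
  intros Ha.
  apply (is_int0inf_dominated _ (fun y => (1 + hnu nu) ^ j * (Emax (shift m a (J nu y)) * exp (- y)))
           ((1 + hnu nu) ^ j * xi n nu a m)).
  - apply ex_RInt_of_continuous. intros x. now apply integrand_continuous.
  - intros y _. pose proof (exp_pos (- y)). pose proof (W_nonneg (shift m a (J nu y))).
    pose proof (inv_upper j Hinv (shift m a (J nu y))). unfold integrand. split; nra.
  - now apply is_int0inf_scal, is_int0inf_Emax_shift.
Qed.

Lemma Q_upper (m : nat -> R) (a : nat) : (a < n)%nat ->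
  Q j m a <= (1 + hnu nu) ^ j * xi n nu a m.
Proof.
  intros Ha.
  apply (is_int0inf_le _ _ _ _ (is_int0inf_Q m a Ha)
           (is_int0inf_scal _ _ ((1 + hnu nu) ^ j) (is_int0inf_Emax_shift m a Ha))).
  intros y _. pose proof (exp_pos (- y)). pose proof (inv_upper j Hinv (shift m a (J nu y))).
  unfold integrand. nra.
Qed.

(* The lower bound integrates to xi plus the geometric term, using
   int_0^oo phi(y) e^{-y} dy = g(nu) and the pair-minimum estimate [cmin_shift]. *)
Lemma Q_lower (m : nat -> R) (a : nat) : (a < n)%nat ->
  xi n nu a m + hnu nu * geom_partial (gnu nu) j * cmin m * gnu nu <= Q j m a.
Proof.
  intros Ha. set (K := hnu nu * geom_partial (gnu nu) j).
  assert (HK : 0 <= K).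
  { apply Rmult_le_pos; [left; apply hnu_pos; auto|].
    apply geom_partial_nonneg. left. apply gnu_pos; auto. }
  apply (is_int0inf_le _ _ _ _
           (is_int0inf_plus _ _ _ _ (is_int0inf_Emax_shift m a Ha)
              (is_int0inf_scal _ _ (K * cmin m) (is_int0inf_phi nu Hnu)))
           (is_int0inf_Q m a Ha)).
  intros y _. unfold integrand. set (s := shift m a (J nu y)).
  pose proof (inv_lower j Hinv s) as Hlow.
  replace (hnu nu * cmin s * geom_partial (gnu nu) j) with (K * cmin s) in Hlow
    by (unfold K; ring).
  pose proof (cmin_shift m a (J nu y) Ha) as Hc. fold (phi nu y) s in Hc.
  pose proof (Rmult_le_compat_l K _ _ HK Hc).
  replace (Emax s * exp (- y) + K * cmin m * (phi nu y * exp (- y)))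
    with ((Emax s + K * (cmin m * phi nu y)) * exp (- y)) by ring.
  apply Rmult_le_compat_r; [left; apply exp_pos|lra].
Qed.

Lemma Q_mono (m m' : nat -> R) (a : nat) : (a < n)%nat -> le_on m m' -> Q j m a <= Q j m' a.
Proof.
  intros Ha Hle. apply (is_int0inf_le _ _ _ _ (is_int0inf_Q m a Ha) (is_int0inf_Q m' a Ha)).
  intros y _. apply Rmult_le_compat_r; [left; apply exp_pos|].
  apply (inv_mono j Hinv). intros x Hx. unfold shift. specialize (Hle x Hx). lra.
Qed.

Lemma Q_translate (m : nat -> R) (t : R) (a : nat) : (a < n)%nat ->
  Q j (translate m t) a = exp t * Q j m a.
Proof.
  intros Ha. apply int0inf_eq.
  replace (fun y => W j (shift (translate m t) a (J nu y)) * exp (- y))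
    with (fun y => exp t * integrand m a y).
  - now apply is_int0inf_scal, is_int0inf_Q.
  - apply functional_extensionality. intros y. unfold integrand.
    replace (shift (translate m t) a (J nu y)) with (translate (shift m a (J nu y)) t)
      by (apply functional_extensionality; intros x; unfold shift, translate; ring).
    rewrite (inv_translate j Hinv). ring.
Qed.

Lemma Vrev_integral (m : nat -> R) (a : nat) : (a < n)%nat ->
  int0inf (fun y => Vrev n nu j (shift m a (J nu y)) * dens n nu m a y) = / sumexp n m * Q j m a.
Proof.
  intros Ha. apply int0inf_eq.
  replace (fun y => Vrev n nu j (shift m a (J nu y)) * dens n nu m a y)
    with (fun y => / sumexp n m * integrand m a y)
    by (apply functional_extensionality; intros y; symmetry; now apply density_normalization).
  now apply is_int0inf_scal, is_int0inf_Q.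
Qed.

Lemma W_succ (m : nat -> R) : W (S j) m = maxI n (Q j m).
Proof.
  unfold W at 1. simpl Vrev. pose proof (sumexp_pos n m Hn1).
  rewrite (maxI_ext n _ (fun a => / sumexp n m * Q j m a)) by (intros a Ha; now apply Vrev_integral).
  rewrite maxI_scal by (auto; left; apply Rinv_0_lt_compat; lra). field. lra.
Qed.

(* Induction step: the lower bound uses the second-best index, the upper bound [xi_upper]. *)
Lemma invariant_succ : Invariant (S j).
Proof.
  split; intros m; rewrite ?W_succ.
  - intros m' Hle. rewrite W_succ. apply maxI_mono; auto. intros a Ha. now apply Q_mono.
  - intros t. rewrite W_succ, <- maxI_scal by (auto; left; apply exp_pos).
    apply maxI_ext. intros a Ha. now apply Q_translate.
  - destruct (top_two_exist m) as [x1 [x2 [H1 [H2 [H3 [H4 H5]]]]]].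
    apply Rle_trans with (Q j m x2); [|now apply maxI_ge].
    eapply Rle_trans; [|now apply Q_lower].
    pose proof (xi_second_lower m x1 x2 H1 H2 H3 H4). simpl geom_partial. nra.
  - apply maxI_le; auto. intros a Ha. simpl pow.
    pose proof (xi_upper m a Ha). pose proof (Q_upper m a Ha).
    pose proof (pow_le (1 + hnu nu) j ltac:(pose proof (hnu_pos nu Hnu); lra)). nra.
Qed.
End InductionStep.

Lemma invariant_all (j : nat) : Invariant j.
Proof. induction j; [apply invariant_zero|now apply invariant_succ]. Qed.
End ValueRecursion.

(** * Bounds on q_k and V_k *)
Section Bounds.
Variables (n : nat) (nu : R) (L : nat).
Hypothesis Hn : (2 <= n)%nat.
Hypothesis Hnu : 0 < nu < 1.

Lemma qk_as_Q (k : nat) (m : nat -> R) (a : nat) : (k < L)%nat -> (a < n)%nat ->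
  qk n nu L k m a = / sumexp n m * Q n nu (L - k - 1) m a.
Proof.
  intros Hk Ha. unfold qk, Vstar. replace (L - S k)%nat with (L - k - 1)%nat by lia.
  apply Vrev_integral; auto. apply invariant_all; auto.
Qed.

Lemma Vstar_as_max (k : nat) (m : nat -> R) : (k < L)%nat -> Vstar n nu L k m = maxI n (qk n nu L k m).
Proof. intros Hk. unfold Vstar. now replace (L - k)%nat with (S (L - S k)) by lia. Qed.

Lemma qk_bounds (k : nat) (m : nat -> R) (a : nat) : (k < L)%nat -> (a < n)%nat ->
  qLB n nu L k m a <= qk n nu L k m a /\ qk n nu L k m a <= qUB n nu L k m a.
Proof.
  intros Hk Ha. rewrite qk_as_Q by auto.
  assert (Hinv : 0 < / sumexp n m) by (apply Rinv_0_lt_compat, sumexp_pos; lia).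
  pose proof (invariant_all n nu Hn Hnu (L - k - 1)) as HI.
  split.
  - unfold qLB. apply Rmult_le_compat_l; [lra|]. rewrite geomsum_partial.
    eapply Rle_trans; [|now apply Q_lower]. unfold cmin. lra.
  - unfold qUB, Rdiv. rewrite (Rmult_comm _ (/ sumexp n m)), Rmult_assoc.
    apply Rmult_le_compat_l; [lra|]. now apply Q_upper.
Qed.

(* Both bounds are maximized at the second-best index, because xi is. *)
Lemma qLB_qUB_argmax (k : nat) (m : nat -> R) (x1 x2 : nat) : (k < L)%nat ->
  (x1 < n)%nat -> (x2 < n)%nat -> x1 <> x2 ->
  (forall y, (y < n)%nat -> m y <= m x1) -> (forall y, (y < n)%nat -> y <> x1 -> m y <= m x2) ->
  maxI n (qLB n nu L k m) = qLB n nu L k m x2 /\ maxI n (qUB n nu L k m) = qUB n nu L k m x2.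
Proof.
  intros Hk H1 H2 H12 Hbest Hsecond.
  assert (Hinv : 0 < / sumexp n m) by (apply Rinv_0_lt_compat, sumexp_pos; lia).
  pose proof (hnu_pos nu Hnu). assert (Hn1 : (1 <= n)%nat) by lia.
  split; apply maxI_at; auto; intros a Ha.
  - unfold qLB. apply Rmult_le_compat_l; [lra|].
    pose proof (xi_le_second n nu Hn Hnu m x1 x2 H1 H2 H12 Hbest Hsecond a Ha). lra.
  - unfold qUB. apply Rmult_le_compat_l.
    + apply Rmult_le_pos; [apply pow_le|]; lra.
    + now apply (xi_le_second n nu Hn Hnu m x1).
Qed.
End Bounds.

Theorem theorem1 (n : nat) (nu : R) (L : nat) :
  (2 <= n)%nat -> 0 < nu < 1 -> (1 <= L)%nat ->
  (forall (k : nat) (m : nat -> R) (a : nat), (k < L)%nat -> (a < n)%nat ->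
     qLB n nu L k m a <= qk n nu L k m a /\ qk n nu L k m a <= qUB n nu L k m a)
  /\
  (forall (k : nat) (m : nat -> R) (x1 x2 : nat), (k < L)%nat ->
     (x1 < n)%nat -> (x2 < n)%nat -> x1 <> x2 ->
     (forall y, (y < n)%nat -> m y <= m x1) ->
     (forall y, (y < n)%nat -> y <> x1 -> m y <= m x2) ->
     qLB n nu L k m x2 = maxI n (qLB n nu L k m) /\
     maxI n (qLB n nu L k m) <= Vstar n nu L k m /\
     Vstar n nu L k m <= maxI n (qUB n nu L k m) /\
     maxI n (qUB n nu L k m) = qUB n nu L k m x2).
Proof.
  intros Hn Hnu _. split; [now apply qk_bounds|].
  intros k m x1 x2 Hk H1 H2 H12 Hbest Hsecond.
  destruct (qLB_qUB_argmax n nu L Hn Hnu k m x1 x2) as [HLB HUB]; auto.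
  assert (Hn1 : (1 <= n)%nat) by lia.
  rewrite Vstar_as_max by auto.
  repeat split; auto.
  - apply maxI_mono; auto. intros a Ha. now apply qk_bounds.
  - apply maxI_mono; auto. intros a Ha. now apply qk_bounds.
Qed.
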